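(* Let $\mathbb{F}$ be an algebraically closed field of characteristic $2$. Let $A_1,\dots,A_4,B_1,\dots,B_4\in M(2)$ satisfy the Standing Hypothesis, and suppose $A_1=\begin{pmatrix}a_1&1\\0&a_1\end{pmatrix}$ and $B_1=\begin{pmatrix}b_1&1\\0&b_1\end{pmatrix}$ for some $a_1,b_1\in\mathbb{F}$. Then $\mathrm{tr}(A_1A_2A_3A_4)=\mathrm{tr}(B_1B_2B_3B_4)$.
   Context: $M(2)$ is the space of $2\times 2$ matrices over $\mathbb{F}$. Standing Hypothesis: $\mathrm{tr}(A_i)=\mathrm{tr}(B_i)$ and $\det(A_i)=\det(B_i)$ for $1\le i\le 4$; $\mathrm{tr}(A_iA_j)=\mathrm{tr}(B_iB_j)$ for $1\le i<j\le 4$; $\mathrm{tr}(A_iA_jA_k)=\mathrm{tr}(B_iB_jB_k)$ for $1\le i<j<k\le 4$. *)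

From HB Require Import structures.
From mathcomp Require Import all_boot all_order all_algebra.
Set Implicit Arguments. Unset Strict Implicit. Unset Printing Implicit Defensive.
Import GRing.Theory.
Local Open Scope ring_scope.

Definition standing_hyp (F : comNzRingType)
  (A1 A2 A3 A4 B1 B2 B3 B4 : 'M[F]_2) : Prop :=
  [/\
      [/\ \tr A1 = \tr B1, \tr A2 = \tr B2, \tr A3 = \tr B3 & \tr A4 = \tr B4],
      [/\ \det A1 = \det B1, \det A2 = \det B2, \det A3 = \det B3
        & \det A4 = \det B4],
      [/\ \tr (A1 *m A2) = \tr (B1 *m B2), \tr (A1 *m A3) = \tr (B1 *m B3),
          \tr (A1 *m A4) = \tr (B1 *m B4), \tr (A2 *m A3) = \tr (B2 *m B3)
        & \tr (A2 *m A4) = \tr (B2 *m B4) /\ \tr (A3 *m A4) = \tr (B3 *m B4)]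
    &
      [/\ \tr (A1 *m A2 *m A3) = \tr (B1 *m B2 *m B3),
          \tr (A1 *m A2 *m A4) = \tr (B1 *m B2 *m B4),
          \tr (A1 *m A3 *m A4) = \tr (B1 *m B3 *m B4)
        & \tr (A2 *m A3 *m A4) = \tr (B2 *m B3 *m B4)]].

Definition jordan2 (F : nzRingType) (a : F) : 'M[F]_2 :=
  \matrix_(i < 2, j < 2)
    (if i == j then a else if ((i : nat) == 0%N) && ((j : nat) == 1%N) then 1 else 0).

From HB Require Import structures.
From mathcomp Require Import all_boot all_order all_algebra.
From mathcomp Require Import ring.
Set Implicit Arguments. Unset Strict Implicit. Unset Printing Implicit Defensive.
Import GRing.Theory.
Local Open Scope ring_scope.

(* Since tr (J_a X) = a tr X + X_10 for the Jordan block J_a, the hypotheses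
   involving A1 = J_a1 and B1 = J_b1 say that a1^2 = b1^2, hence a1 = b1 in
   characteristic 2, and that the A's and B's have the same lower-left entries
   X_10 and (XY)_10; the claim reduces to (A2 A3 A4)_10 = (B2 B3 B4)_10.
   Conjugation by an upper unitriangular shear fixes lower-left entries and
   respects products.  If some factor C has C_10 <> 0, a suitable shear makes
   C_00 vanish, after which C depends only on C_10, tr C, det C, and every X is
   recovered from X_10, tr X, (CX)_10 and tr (CX), all of which the A's and B's
   share.  If no factor has a lower-left entry, the product is triangular. *)

Local Notation i0 := (ord0 : 'I_2).
Local Notation i1 := (ord_max : 'I_2).

Section TwoByTwo.
Variable R : comNzRingType.
Implicit Types (A B C X Y Z : 'M[R]_2) (a k : R).

Lemma ord2P (i : 'I_2) : i = i0 \/ i = i1.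
Proof. by case: i => [[|[|//]] ?]; [left | right]; apply/val_inj. Qed.

Lemma mx2P A B : A i0 i0 = B i0 i0 -> A i0 i1 = B i0 i1 ->
  A i1 i0 = B i1 i0 -> A i1 i1 = B i1 i1 -> A = B.
Proof.
by move=> e00 e01 e10 e11; apply/matrixP => i j; case: (ord2P i) => ->; case: (ord2P j) => ->.
Qed.

Lemma mulmx2E A B i j : (A *m B) i j = A i i0 * B i0 j + A i i1 * B i1 j.
Proof.
rewrite mxE !big_ord_recl big_ord0 addr0.
by have -> : lift i0 ord0 = i1 by apply/val_inj.
Qed.

Lemma mxtrace2E A : \tr A = A i0 i0 + A i1 i1.
Proof. by rewrite /mxtrace !big_ord_recl big_ord0 addr0; congr (_ + A _ _); apply/val_inj. Qed.

Lemma det2E A : \det A = A i0 i0 * A i1 i1 - A i0 i1 * A i1 i0.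
Proof.
rewrite (expand_det_row _ ord0) !big_ord_recl big_ord0 addr0 /cofactor !det_mx11 !mxE.
have -> : lift i0 ord0 = i1 by apply/val_inj.
have -> : lift i1 ord0 = i0 by apply/val_inj.
by rewrite /= expr0 expr1 mul1r mulN1r mulrN.
Qed.

Lemma mxtrace_jordan2_mul a X : \tr (jordan2 a *m X) = a * \tr X + X i1 i0.
Proof. by rewrite !mxtrace2E !mulmx2E !mxE /=; ring. Qed.

Lemma det_jordan2 a : \det (jordan2 a) = a ^+ 2.
Proof. by rewrite det2E !mxE /=; ring. Qed.

Lemma mulmx3_upper_entry10 X Y Z :
  X i1 i0 = 0 -> Y i1 i0 = 0 -> Z i1 i0 = 0 -> (X *m Y *m Z) i1 i0 = 0.
Proof. by move=> X10 Y10 Z10; rewrite !mulmx2E X10 Y10 Z10; ring. Qed.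

Definition shear k : 'M[R]_2 :=
  \matrix_(i, j) if i == j then 1 else if (i == i0) && (j == i1) then k else 0.

Definition shear_conj k X := shear k *m X *m shear (- k).

Lemma shear_mulN k : shear (- k) *m shear k = 1.
Proof. by apply: mx2P; rewrite mulmx2E !mxE /=; ring. Qed.

Lemma shear_conjM k X Y : shear_conj k (X *m Y) = shear_conj k X *m shear_conj k Y.
Proof. by rewrite /shear_conj !mulmxA -(mulmxA _ (shear (- k))) shear_mulN mulmx1. Qed.

Lemma shear_conj_entry10 k X : (shear_conj k X) i1 i0 = X i1 i0.
Proof. by rewrite !mulmx2E !mxE /=; ring. Qed.

Definition lower_inv X := (X i1 i0, \tr X, \det X).

Definition pivot_coords C X := (X i1 i0, \tr X, (C *m X) i1 i0, \tr (C *m X)).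

Lemma pivot_coords_self X X' :
  lower_inv X = lower_inv X' -> pivot_coords X X = pivot_coords X' X'.
Proof.
have sq10 Y : (Y *m Y) i1 i0 = Y i1 i0 * \tr Y by rewrite !mulmx2E mxtrace2E; ring.
have trsq Y : \tr (Y *m Y) = \tr Y ^+ 2 - 2%:R * \det Y.
  by rewrite !mxtrace2E !mulmx2E det2E; ring.
by case=> r t d; rewrite /pivot_coords !sq10 !trsq r t d.
Qed.

Lemma pivot_coords_swap X Y X' Y' : lower_inv X = lower_inv X' ->
  pivot_coords X Y = pivot_coords X' Y' -> pivot_coords Y X = pivot_coords Y' X'.
Proof.
have swap10 Z W : (W *m Z) i1 i0 = Z i1 i0 * \tr W + W i1 i0 * \tr Z - (Z *m W) i1 i0.
  by rewrite !mulmx2E !mxtrace2E; ring.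
case=> rX tX _ [rY tY m f].
by rewrite /pivot_coords swap10 (swap10 X') mxtrace_mulC (mxtrace_mulC Y') rX tX rY tY m f.
Qed.

End TwoByTwo.

Section Pivot.
Variable F : fieldType.
Implicit Types (C X Y Z : 'M[F]_2).

Definition pivot_form (c t d : F) (v : F * F * F * F) : 'M[F]_2 :=
  let: (r, tX, m, f) := v in
  let x00 := (m - t * r) / c in
  let x11 := tX - x00 in
  \matrix_(i, j) if i == i0 then (if j == i0 then x00 else (f - t * x11 + d * r / c) / c)
                 else (if j == i0 then r else x11).

Lemma shear_conj_pivot C X : C i1 i0 != 0 ->
  shear_conj (- C i0 i0 / C i1 i0) X =
  pivot_form (C i1 i0) (\tr C) (\det C) (pivot_coords C X).
Proof.
move=> c_neq0; apply: mx2P; rewrite /= !mxtrace2E !mulmx2E det2E !mxE /=;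
  by field; rewrite ?c_neq0.
Qed.

Lemma mulmx3_entry10_pivot C C' X Y Z X' Y' Z' : C i1 i0 != 0 ->
  lower_inv C = lower_inv C' -> pivot_coords C X = pivot_coords C' X' ->
  pivot_coords C Y = pivot_coords C' Y' -> pivot_coords C Z = pivot_coords C' Z' ->
  (X *m Y *m Z) i1 i0 = (X' *m Y' *m Z') i1 i0.
Proof.
move=> c_neq0 [c_eq t_eq d_eq] eX eY eZ.
have c'_neq0 : C' i1 i0 != 0 by rewrite -c_eq.
rewrite -[LHS](shear_conj_entry10 (- C i0 i0 / C i1 i0)).
rewrite -[RHS](shear_conj_entry10 (- C' i0 i0 / C' i1 i0)).
rewrite !shear_conjM !(shear_conj_pivot _ c_neq0) !(shear_conj_pivot _ c'_neq0) eX eY eZ.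
by rewrite c_eq t_eq d_eq.
Qed.

Lemma mulmx3_entry10_eq X Y Z X' Y' Z' :
  lower_inv X = lower_inv X' -> lower_inv Y = lower_inv Y' -> lower_inv Z = lower_inv Z' ->
  pivot_coords X Y = pivot_coords X' Y' -> pivot_coords X Z = pivot_coords X' Z' ->
  pivot_coords Y Z = pivot_coords Y' Z' ->
  (X *m Y *m Z) i1 i0 = (X' *m Y' *m Z') i1 i0.
Proof.
move=> eX eY eZ eXY eXZ eYZ.
have [X_eq _ _] := eX; have [Y_eq _ _] := eY; have [Z_eq _ _] := eZ.
have [X0|Xn0] := eqVneq (X i1 i0) 0.
  have [Y0|Yn0] := eqVneq (Y i1 i0) 0.
    have [Z0|Zn0] := eqVneq (Z i1 i0) 0.
      by rewrite !mulmx3_upper_entry10 // -?X_eq -?Y_eq -?Z_eq.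
    apply: (mulmx3_entry10_pivot Zn0 eZ) => //; last exact: pivot_coords_self.
    - exact: pivot_coords_swap eXZ.
    - exact: pivot_coords_swap eYZ.
  apply: (mulmx3_entry10_pivot Yn0 eY) => //; first exact: pivot_coords_swap eXY.
  exact: pivot_coords_self.
apply: (mulmx3_entry10_pivot Xn0 eX) => //; exact: pivot_coords_self.
Qed.

End Pivot.

Lemma sqrf_inj_pchar2 (F : idomainType) (a b : F) :
  2%N \in [pchar F] -> a ^+ 2 = b ^+ 2 -> a = b.
Proof.
move=> ch2 sq_eq.
have : (a - b) ^+ 2 = 0.
  rewrite -(pFrobenius_autE ch2) pFrobenius_autB_comm; last exact: mulrC.
  by rewrite !pFrobenius_autE sq_eq subrr.
by move/eqP; rewrite expf_eq0 subr_eq0 => /eqP.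
Qed.

Theorem lemma7 (F : closedFieldType) (hchar : 2%N \in [pchar F])
  (A1 A2 A3 A4 B1 B2 B3 B4 : 'M[F]_2) (a1 b1 : F) :
  standing_hyp A1 A2 A3 A4 B1 B2 B3 B4 ->
  A1 = jordan2 a1 -> B1 = jordan2 b1 ->
  \tr (A1 *m A2 *m A3 *m A4) = \tr (B1 *m B2 *m B3 *m B4).
Proof.
move=> hyp eA1 eB1; subst A1 B1.
case: hyp => [[_ t2 t3 t4] [d1 d2 d3 d4] [f12 f13 f14 f23 [f24 f34]] [g123 g124 g134 g234]].
have a1_eq : a1 = b1 by apply: (sqrf_inj_pchar2 hchar); rewrite -!det_jordan2 d1.
subst b1.
move: g123 g124 g134; rewrite -!mulmxA => g123 g124 g134.
have entry10_eq X Y : \tr X = \tr Y -> \tr (jordan2 a1 *m X) = \tr (jordan2 a1 *m Y) ->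
    X i1 i0 = Y i1 i0.
  by move=> tXY; rewrite !mxtrace_jordan2_mul tXY => /addrI.
rewrite !mxtrace_jordan2_mul !mulmxA g234; congr (_ + _).
apply: mulmx3_entry10_eq.
- by rewrite /lower_inv (entry10_eq _ _ t2 f12) t2 d2.
- by rewrite /lower_inv (entry10_eq _ _ t3 f13) t3 d3.
- by rewrite /lower_inv (entry10_eq _ _ t4 f14) t4 d4.
- by rewrite /pivot_coords (entry10_eq _ _ t3 f13) (entry10_eq _ _ f23 g123) t3 f23.
- by rewrite /pivot_coords (entry10_eq _ _ t4 f14) (entry10_eq _ _ f24 g124) t4 f24.
- by rewrite /pivot_coords (entry10_eq _ _ t4 f14) (entry10_eq _ _ f34 g134) t4 f34.
Qed.
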